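(* A partial function $f$ on $\{0,1\}^n$ is not submodular-extendable if and only if $f$ contains a path certificate.
   Context: Identify $\{0,1\}^n$ with subsets of $[n]$; the hypercube graph has edges $(S,S+i)$ for $i\notin S$. A partial function $f$ is a real-valued function on a subset $\mathcal{D}=\mathrm{D}(f)\subseteq\{0,1\}^n$; it is submodular-extendable if some submodular $g:2^{[n]}\to\mathbb{R}$ (i.e. $g(S+i)-g(S)\ge g(T+i)-g(T)$ whenever $S\subseteq T$, $i\notin T$) agrees with $f$ on $\mathcal{D}$. For hypercube edges $e=(S,S+i)$ and $e'=(T,T+j)$ write $e\preceq e'$ if $i=j$ and $S\subseteq T$. Consider a finite collection $\mathbf{P}$ of directed paths in the hypercube graph, each being either a directed cycle or a directed path whose two endpoints lie in $\mathcal{D}$. A traversed edge is upward if it is traversed from the smaller set to the larger and downward otherwise. Let $\mathbf{U}$ (resp. $\mathbf{D}$) be the multiset of upward (resp. downward) edge traversals in $\mathbf{P}$, counted with multiplicity. $\mathbf{P}$ is matched if there is a perfect matching between $\mathbf{U}$ and $\mathbf{D}$ in which each upward edge $e$ is matched to a downward edge $e'$ with $e\preceq e'$. The value of a path from $S\in\mathcal{D}$ to $S'\in\mathcal{D}$ is $f(S')-f(S)$, cycles have value $0$, and the value of $\mathbf{P}$ is the sum of the values of its members. A path certificate for $f$ is a matched collection $\mathbf{P}$ of negative value. *)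

From HB Require Import structures.
From mathcomp Require Import all_boot all_order all_algebra.
Set Implicit Arguments. Unset Strict Implicit. Unset Printing Implicit Defensive.
Import Order.TTheory GRing.Theory Num.Theory.
Local Open Scope ring_scope.

(* Vertices of the hypercube {0,1}^n are subsets of [n] = 'I_n. *)
Notation vertex n := {set 'I_n}.

(* A hypercube edge (S, S+i) with i \notin S is represented by the pair (S, i). *)
Definition edge n := (vertex n * 'I_n)%type.

Definition edge_le n (e e' : edge n) : bool := (e.2 == e'.2) && (e.1 \subset e'.1).

Definition submodular (R : realFieldType) n (g : vertex n -> R) : Prop :=
  forall (S T : vertex n) (i : 'I_n), S \subset T -> i \notin T ->
    g (i |: T) - g T <= g (i |: S) - g S.

(* A partial function: domain D, values f on D (values of f outside D are irrelevant). *)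
Definition submodular_extendable (R : realFieldType) n (D : {set vertex n})
    (f : vertex n -> R) : Prop :=
  exists g : vertex n -> R, submodular g /\ forall S, S \in D -> g S = f S.

Definition toggle n (x : vertex n) (i : 'I_n) : vertex n :=
  if i \in x then x :\ i else i |: x.

(* A directed walk in the hypercube graph is given by its start vertex and
   the sequence of coordinates flipped along the way. *)
Definition walk n := (vertex n * seq 'I_n)%type.

Definition wend n (w : walk n) : vertex n := foldl (@toggle n) w.1 w.2.

(* The traversed edges: (true, e) = upward traversal of e, (false, e) = downward. *)
Fixpoint traversals n (x : vertex n) (s : seq 'I_n) : seq (bool * edge n) :=
  match s with
  | [::] => [::]
  | i :: s' => (i \notin x, (x :\ i, i)) :: traversals (toggle x i) s'
  end.

Definition wtrav n (w : walk n) := traversals w.1 w.2.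

Definition up_edges n (P : seq (walk n)) : seq (edge n) :=
  flatten [seq [seq t.2 | t <- wtrav w & t.1] | w <- P].
Definition down_edges n (P : seq (walk n)) : seq (edge n) :=
  flatten [seq [seq t.2 | t <- wtrav w & ~~ t.1] | w <- P].

Definition matched n (P : seq (walk n)) : Prop :=
  exists Dm : seq (edge n), perm_eq Dm (down_edges P) /\ all2 (@edge_le n) (up_edges P) Dm.

Definition is_cycle n (w : walk n) : bool := wend w == w.1.

Definition admissible n (D : {set vertex n}) (P : seq (walk n)) : bool :=
  all (fun w => is_cycle w || ((w.1 \in D) && (wend w \in D))) P.

Definition walk_value (R : realFieldType) n (f : vertex n -> R) (w : walk n) : R :=
  if is_cycle w then 0 else f (wend w) - f w.1.

Definition value (R : realFieldType) n (f : vertex n -> R) (P : seq (walk n)) : R :=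
  \sum_(w <- P) walk_value f w.

Definition path_certificate (R : realFieldType) n (D : {set vertex n})
    (f : vertex n -> R) (P : seq (walk n)) : Prop :=
  admissible D P /\ matched P /\ value f P < 0.

(* Soundness: for a submodular [g] agreeing with [f] on [D], the value of a
   collection telescopes into the marginal gains of [g] along its upward
   traversals minus those along its downward ones, and the matching pairs each
   upward edge with a downward edge above it, whose gain is no larger by
   submodularity; so the value is nonnegative.

   Completeness is a Farkas-type duality, proved by Fourier-Motzkin
   elimination.  Boundaries (end minus start indicators) of matched collections
   form an additive cone of integer vectors, and each submodular inequality is
   the pairing of [g] with the boundary of a matched two-walk collection.  If
   every cone element vanishing off [D] pairs nonnegatively with [f], then [f]
   extends vertex by vertex: eliminating a vertex keeps the cone elements that
   vanish there plus the cancelling combinations of opposite-signed ones, and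
   their nonnegativity is exactly what makes the new value at the vertex
   choosable.  Finally, a matched collection whose boundary vanishes off [D] is
   rerouted, by joining a path ending at a vertex of zero boundary to a path
   starting there, until all path endpoints lie in [D]; without a certificate
   its value is then nonnegative. *)

From mathcomp Require Import all_boot all_order all_algebra.
From Stdlib Require Import Classical.
From mathcomp Require Import ring lra zify.
Set Implicit Arguments. Unset Strict Implicit. Unset Printing Implicit Defensive.
Import Order.TTheory GRing.Theory Num.Theory.
Local Open Scope ring_scope.

Lemma setD1_notin (T : finType) (A : {set T}) x : x \notin A -> A :\ x = A.
Proof. by move=> xA; apply/setDidPl; rewrite disjoint_sym disjoints1. Qed.

Lemma traversals_cat n (x : vertex n) s1 s2 :
  traversals x (s1 ++ s2) = traversals x s1 ++ traversals (foldl (@toggle n) x s1) s2.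
Proof. by elim: s1 x => [|i s1 IHs] x //=; rewrite IHs. Qed.

Section Telescoping.
Variables (n : nat) (R : realFieldType) (g : vertex n -> R).
Implicit Types (x : vertex n) (s : seq 'I_n) (w : walk n) (P : seq (walk n)).

Definition gain (e : edge n) : R := g (e.2 |: e.1) - g e.1.

Definition signed_gain (t : bool * edge n) : R := if t.1 then gain t.2 else - gain t.2.

Lemma sum_traversals x s :
  \sum_(t <- traversals x s) signed_gain t = g (foldl (@toggle n) x s) - g x.
Proof.
elim: s x => [|i s IHs] x /=; first by rewrite big_nil subrr.
rewrite big_cons IHs /signed_gain /gain /toggle /=.
have [ix|nix] /= := boolP (i \in x).
  by rewrite setD1K // opprB addrC addrA subrK.
by rewrite setD1_notin // addrC addrA subrK.
Qed.

Lemma walk_gain w :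
  \sum_(e <- [seq t.2 | t <- wtrav w & t.1]) gain e -
  \sum_(e <- [seq t.2 | t <- wtrav w & ~~ t.1]) gain e = g (wend w) - g w.1.
Proof.
rewrite -sum_traversals -/(wtrav w) !big_map !big_filter.
rewrite [RHS](bigID (fun t : bool * edge n => t.1)) /= -sumrN.
by congr (_ + _); apply: eq_bigr => -[[] e] //=.
Qed.

Lemma collection_gain P :
  \sum_(e <- up_edges P) gain e - \sum_(e <- down_edges P) gain e =
  \sum_(w <- P) (g (wend w) - g w.1).
Proof.
elim: P => [|w P IHP]; first by rewrite !big_nil subrr.
rewrite big_cons -IHP -walk_gain /up_edges /down_edges /= !big_cat /=.
by rewrite opprD addrACA.
Qed.

Lemma traversals_proper x s t : t \in traversals x s -> t.2.2 \notin t.2.1.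
Proof.
elim: s x => [|i s IHs] x //=; rewrite inE => /predU1P[-> /=|/IHs //].
by rewrite !inE eqxx.
Qed.

Lemma down_edges_proper P e : e \in down_edges P -> e.2 \notin e.1.
Proof.
case/flattenP=> _ /mapP[w _ ->] /mapP[t]; rewrite mem_filter => /andP[_ tw] ->.
exact: traversals_proper tw.
Qed.

Lemma submodular_sum_gain_le (U Dm : seq (edge n)) : submodular g ->
  all2 (@edge_le n) U Dm -> {in Dm, forall e : edge n, e.2 \notin e.1} ->
  \sum_(e <- Dm) gain e <= \sum_(e <- U) gain e.
Proof.
move=> subg; elim: U Dm => [|a U IHU] [|b Dm] //= /andP[/andP[/eqP ab ab_sub] UDm].
move=> Dm_proper; rewrite !big_cons lerD //; last first.
  by apply: IHU => // e eDm; apply: Dm_proper; rewrite inE eDm orbT.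
by rewrite /gain ab; apply: subg => //; apply: Dm_proper; rewrite mem_head.
Qed.

End Telescoping.

Lemma walk_valueE (R : realFieldType) n (f : vertex n -> R) (w : walk n) :
  walk_value f w = f (wend w) - f w.1.
Proof. by rewrite /walk_value /is_cycle; case: eqP => [->|]; rewrite ?subrr. Qed.

Lemma certificate_not_extendable (R : realFieldType) n (D : {set vertex n})
    (f : vertex n -> R) (P : seq (walk n)) :
  path_certificate D f P -> ~ submodular_extendable D f.
Proof.
move=> [admP [[Dm [permDm UDm]] value_neg]] [g [subg gD]].
suff : 0 <= value f P by rewrite leNgt value_neg.
have -> : value f P = \sum_(w <- P) (g (wend w) - g w.1).
  rewrite /value !big_seq; apply: eq_bigr => w wP; rewrite walk_valueE.
  by case/orP: (allP admP w wP) => [/eqP ->|/andP[w1D wendD]]; rewrite ?subrr ?gD.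
rewrite -collection_gain subr_ge0 -(perm_big _ permDm) /=.
apply: submodular_sum_gain_le => // e eDm.
by apply: (@down_edges_proper n P); rewrite -(perm_mem permDm).
Qed.

Section Cone.
Variables (R : realFieldType) (V : finType).
Implicit Types (a b mu p q : {ffun V -> int}) (f g : V -> R) (x : V).

Definition dot mu g : R := \sum_v (mu v)%:~R * g v.

Lemma dotD a b g : dot (a + b) g = dot a g + dot b g.
Proof. by rewrite /dot -big_split; apply: eq_bigr => v _; rewrite ffunE intrD mulrDl. Qed.

Lemma dotMn a k g : dot (a *+ k) g = dot a g *+ k.
Proof.
by rewrite /dot -sumrMnl; apply: eq_bigr => v _; rewrite ffunMnE raddfMn mulrnAl.
Qed.

Definition shift g x u : V -> R := fun v => g v + (v == x)%:R * u.

Lemma dot_shift b g x u : dot b (shift g x u) = dot b g + (b x)%:~R * u.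
Proof.
rewrite /dot /shift (eq_bigr (fun v => (b v)%:~R * g v + (b v)%:~R * (v == x)%:R * u));
  last by move=> v _; rewrite mulrDr mulrA.
rewrite big_split /=; congr (_ + _).
by rewrite (bigD1 x) //= eqxx mulr1 big1 ?addr0 // => v /negPf->; rewrite mulr0 mul0r.
Qed.

Lemma exists_between (L U : seq R) : {in L & U, forall l u, l <= u} ->
  exists c, {in L, forall l, l <= c} /\ {in U, forall u, c <= u}.
Proof.
elim: L => [|l L IHL] LU.
  elim: U {LU} => [|u U [c [_ cU]]]; first by exists 0.
  exists (Num.min u c); split=> // v; rewrite inE ge_min => /predU1P[->|/cU->];
    by rewrite ?lexx ?orbT.
have [|c [Lc cU]] := IHL; first by move=> l' u l'L; apply: LU; rewrite inE l'L orbT.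
exists (Num.max l c); split=> [v|u uU]; last by rewrite ge_max LU ?mem_head ?cU.
by rewrite inE le_max => /predU1P[->|/Lc->]; rewrite ?lexx ?orbT.
Qed.

Definition add_closed (K : {ffun V -> int} -> Prop) := forall a b, K a -> K b -> K (a + b).

Lemma add_closed_natmul K a k : add_closed K -> K a -> (0 < k)%N -> K (a *+ k).
Proof.
move=> Kadd Ka; case: k => // k _; elim: k => [|k IHk]; first by rewrite mulr1n.
by rewrite mulrS; apply: Kadd.
Qed.

Definition combine x p q : {ffun V -> int} := p *+ `|q x|%N + q *+ `|p x|%N.

Lemma combine_at x p q : 0 < p x -> q x < 0 -> combine x p q x = 0.
Proof.
move=> + +; rewrite ffunE (ffunMnE p) (ffunMnE q).
by move: (p x) (q x) => a c; lia.
Qed.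

Definition eliminate x (B : seq {ffun V -> int}) : seq {ffun V -> int} :=
  [seq b : {ffun V -> int} <- B | b x == 0] ++
  [seq combine x p q | p <- [seq p : {ffun V -> int} <- B | 0 < p x],
                       q <- [seq q : {ffun V -> int} <- B | q x < 0]].

Lemma eliminate_at K x B : add_closed K -> (forall b, b \in B -> K b) ->
  forall b, b \in eliminate x B -> K b /\ b x = 0.
Proof.
move=> Kadd BK b; rewrite mem_cat => /orP[|/allpairsP[[p q] /=]].
  by rewrite mem_filter => /andP[/eqP bx /BK].
rewrite !mem_filter => -[/andP[px /BK Kp] /andP[qx /BK Kq] ->].
split; last exact: combine_at.
by apply: (Kadd); apply: add_closed_natmul => //; lia.
Qed.

Lemma eliminate_coordinate (B : seq {ffun V -> int}) x g :
  {in eliminate x B, forall b, 0 <= dot b g} ->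
  exists u, {in B, forall b, 0 <= dot b (shift g x u)}.
Proof.
move=> elimB; pose L := [seq - dot p g / (p x)%:~R | p <- B & 0 < p x].
pose U := [seq dot q g / (- q x)%:~R | q <- B & q x < 0].
have [|u [lo_u u_up]] := @exists_between L U.
  move=> _ _ /mapP[p + ->] /mapP[q + ->]; rewrite !mem_filter.
  move=> /andP[px pB] /andP[qx qB].
  have /elimB : combine x p q \in eliminate x B.
    by rewrite mem_cat; apply/orP; right; apply/allpairsP; exists (p, q);
      rewrite !mem_filter px qx pB qB.
  rewrite dotD !dotMn -[dot p g *+ _]mulr_natr -[dot q g *+ _]mulr_natr.
  rewrite !natr_absz (gtr0_norm px) (ltr0_norm qx).
  set c := (p x)%:~R; set d := (- q x)%:~R => sum_ge0.
  have c_gt0 : 0 < c by rewrite ltr0z.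
  have d_gt0 : 0 < d by rewrite ltr0z oppr_gt0.
  rewrite -subr_ge0; have -> : dot q g / d - - dot p g / c =
    (dot p g * d + dot q g * c) / (c * d).
    by field; rewrite !intr_eq0 (lt_eqF qx) (gt_eqF px).
  by rewrite divr_ge0 // ltW // mulr_gt0.
exists u => b bB; rewrite dot_shift.
have [bx|bx|bx] := ltgtP (b x) 0.
- have c_gt0 : 0 < (- b x)%:~R :> R by rewrite ltr0z oppr_gt0.
  have /u_up : dot b g / (- b x)%:~R \in U by apply: map_f; rewrite mem_filter bx.
  by rewrite ler_pdivlMr // intrN; lra.
- have c_gt0 : 0 < (b x)%:~R :> R by rewrite ltr0z.
  have /lo_u : - dot b g / (b x)%:~R \in L by apply: map_f; rewrite mem_filter bx.
  by rewrite ler_pdivrMr //; lra.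
- rewrite bx mulr0z mul0r addr0; apply: elimB.
  by rewrite mem_cat mem_filter bx eqxx bB.
Qed.

Lemma cone_extension K (D : {set V}) f (B : seq {ffun V -> int}) :
  add_closed K -> (forall b, b \in B -> K b) ->
  (forall mu, K mu -> {in ~: D, forall v, mu v = 0} -> 0 <= dot mu f) ->
  exists g, {in D, g =1 f} /\ {in B, forall b, 0 <= dot b g}.
Proof.
have [k] := ubnP #|~: D|; elim: k K D B => // k IHk K D B cardD Kadd BK fD.
case: (set_0Vmem (~: D)) => [DT|[x xD]].
  by exists f; split=> // b bB; apply: fD (BK b bB) _ => v; rewrite DT inE.
have xND : x \notin D by rewrite -in_setC.
have [||||g' [g'D elimg']] := IHk (fun mu => K mu /\ mu x = 0) (x |: D) (eliminate x B).
- apply: (@leq_trans #|~: D|); last by rewrite -ltnS.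
  by apply/proper_card; rewrite properC properUr // sub1set.
- by move=> a b [Ka ax] [Kb bx]; split; [apply: Kadd | rewrite ffunE ax bx].
- exact: eliminate_at.
- move=> mu [Kmu mux] mu0; apply: fD => // v; rewrite !in_setC => vND.
  have [->|vx] := eqVneq v x; first by [].
  by apply: mu0; rewrite in_setC in_setU1 negb_or vx.
have [u Bu] := eliminate_coordinate elimg'.
exists (shift g' x u); split=> // v vD.
have vx : v != x by apply: contraNneq xND => <-.
by rewrite /shift (negPf vx) mul0r addr0 g'D // inE vD orbT.
Qed.

End Cone.

Lemma perm_unzip1_all2 (T U : eqType) (r : T -> U -> bool) (M : seq (T * U)) s :
  perm_eq (unzip1 M) s -> all (fun m => r m.1 m.2) M ->
  exists2 t, perm_eq t (unzip2 M) & all2 r s t.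
Proof.
elim: s M => [|a s IHs] M; first by move=> /perm_size; case: M => // _ _; exists [::].
move=> M1s rM; have /mapP[m mM am] : a \in unzip1 M by rewrite (perm_mem M1s) mem_head.
have Mm := perm_to_rem mM.
have [||t tM st] := IHs (rem m M).
- rewrite -(perm_cons a) {1}am; apply: perm_trans M1s.
  by rewrite perm_sym (perm_map fst Mm).
- by apply/allP=> m' /mem_rem; apply: (allP rM).
exists (m.2 :: t); last by rewrite /= st am (allP rM m mM).
by rewrite perm_sym (perm_trans (perm_map snd Mm)) //= perm_cons perm_sym.
Qed.

Section Rerouting.
Variable n : nat.
Implicit Types (v : vertex n) (w : walk n) (P Q : seq (walk n)).

Definition walk_boundary w : {ffun vertex n -> int} :=
  [ffun v => (wend w == v)%:Z - (w.1 == v)%:Z].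

Definition boundary P : {ffun vertex n -> int} := \sum_(w <- P) walk_boundary w.

Definition path_starts_at v w := ~~ is_cycle w && (w.1 == v).
Definition path_ends_at v w := ~~ is_cycle w && (wend w == v).

Lemma boundary_count P v :
  boundary P v = (count (path_ends_at v) P)%:Z - (count (path_starts_at v) P)%:Z.
Proof.
rewrite sum_ffunE; elim: P => [|w P IHP]; first by rewrite big_nil.
rewrite big_cons IHP ffunE /= /path_ends_at /path_starts_at.
have [/eqP->|_] /= := boolP (is_cycle w); first by rewrite subrr add0r.
by rewrite !PoszD opprD addrACA.
Qed.

(* Unlike [matched], this form is evidently invariant under permuting [P]. *)
Definition matched_pairs P := exists M : seq (edge n * edge n),
  [/\ all (fun m => edge_le m.1 m.2) M, perm_eq (unzip1 M) (up_edges P)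
    & perm_eq (unzip2 M) (down_edges P)].

Lemma matched_pairs_matched P : matched_pairs P -> matched P.
Proof.
case=> M [le_M M1 M2]; have [Dm DmM upDm] := perm_unzip1_all2 M1 le_M.
by exists Dm; split=> //; apply: perm_trans M2.
Qed.

Lemma up_edges_cat P Q : up_edges (P ++ Q) = up_edges P ++ up_edges Q.
Proof. by rewrite /up_edges map_cat flatten_cat. Qed.

Lemma down_edges_cat P Q : down_edges (P ++ Q) = down_edges P ++ down_edges Q.
Proof. by rewrite /down_edges map_cat flatten_cat. Qed.

Lemma matched_pairs_cat P Q :
  matched_pairs P -> matched_pairs Q -> matched_pairs (P ++ Q).
Proof.
case=> [M [leM M1 M2]] [N [leN N1 N2]]; exists (M ++ N).
by rewrite all_cat leM leN up_edges_cat down_edges_cat /unzip1 /unzip2 !map_cat !perm_cat.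
Qed.

Lemma matched_pairs_perm P Q : perm_eq P Q -> matched_pairs P -> matched_pairs Q.
Proof.
move=> PQ [M [leM M1 M2]]; exists M; split=> //.
  by apply: perm_trans M1 _; apply/perm_flatten/perm_map.
by apply: perm_trans M2 _; apply/perm_flatten/perm_map.
Qed.

Definition wcat w w' : walk n := (w.1, w.2 ++ w'.2).

Lemma wcat_wtrav w w' : w'.1 = wend w -> wtrav (wcat w w') = wtrav w ++ wtrav w'.
Proof. by move=> w'1; rewrite /wtrav /= traversals_cat w'1. Qed.

Lemma matched_pairs_wcat w w' P : w'.1 = wend w ->
  matched_pairs (w :: w' :: P) -> matched_pairs (wcat w w' :: P).
Proof.
move=> w'1 [M [leM M1 M2]]; exists M.
by rewrite /up_edges /down_edges /= wcat_wtrav // !filter_cat !map_cat -!catA.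
Qed.

Lemma boundary_wcat w w' P : w'.1 = wend w ->
  boundary (wcat w w' :: P) = boundary (w :: w' :: P).
Proof.
move=> w'1; rewrite /boundary !big_cons addrA; congr (_ + _).
apply/ffunP=> v; rewrite !ffunE /wend foldl_cat -/(wend w) -w'1 /=.
by rewrite addrC addrA subrK.
Qed.

Lemma count_paths_balanced P v : boundary P v = 0 ->
  count (path_ends_at v) P = count (path_starts_at v) P.
Proof. by rewrite boundary_count => /eqP; rewrite subr_eq0 => /eqP[]. Qed.

Lemma balanced_end_continues P w : w \in P -> ~~ is_cycle w ->
  boundary P (wend w) = 0 -> exists2 w', w' \in rem w P & path_starts_at (wend w) w'.
Proof.
move=> wP w_path /count_paths_balanced.
rewrite !(permP (perm_to_rem wP)) /=.
have -> : path_ends_at (wend w) w by rewrite /path_ends_at w_path eqxx.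
have -> : path_starts_at (wend w) w = false.
  by rewrite /path_starts_at eq_sym -/(is_cycle w) (negPf w_path) andbF.
by rewrite add0n => ends_starts; apply/hasP; rewrite has_count -ends_starts.
Qed.

Lemma balanced_start_entered P w : w \in P -> ~~ is_cycle w ->
  boundary P w.1 = 0 -> exists2 w', w' \in P & path_ends_at w.1 w'.
Proof.
move=> wP w_path /count_paths_balanced ends_starts; apply/hasP.
rewrite has_count ends_starts -has_count; apply/hasP.
by exists w; rewrite // /path_starts_at w_path /=.
Qed.

Lemma reroute P : matched_pairs P -> exists P', [/\ matched_pairs P',
  boundary P' = boundary P &
  {in P', forall w, ~~ is_cycle w -> boundary P (wend w) != 0 /\ boundary P w.1 != 0}].
Proof.
have [k] := ubnP (size P); elim: k P => // k IHk P sizeP matchedP.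
have [/hasP[w wP /andP[w_path /eqP bw0]]|] :=
  boolP (has (fun w => ~~ is_cycle w && (boundary P (wend w) == 0)) P).
  have [w' w'P /andP[w'_path /eqP w'1]] := balanced_end_continues wP w_path bw0.
  pose Q := rem w' (rem w P).
  have PQ : perm_eq P (w :: w' :: Q).
    by apply: perm_trans (perm_to_rem wP) _; rewrite perm_cons perm_to_rem.
  have bdQ : boundary (wcat w w' :: Q) = boundary P.
    by rewrite boundary_wcat // /boundary (perm_big _ PQ).
  have [||P' [matchedP' bdP' endsP']] := IHk (wcat w w' :: Q).
  - by rewrite -ltnS; apply: leq_trans sizeP; rewrite (perm_size PQ).
  - by apply: matched_pairs_wcat => //; apply: matched_pairs_perm matchedP.
  by rewrite -bdQ; exists P'.
move=> /hasPn no_balanced_end; exists P; split=> // w wP w_path.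
have := no_balanced_end w wP; rewrite w_path /= => -> /=; split=> //.
apply/eqP=> /[dup] bw0 /(balanced_start_entered wP w_path)[w'' w''P].
case/andP=> w''_path /eqP w''_end.
by have := no_balanced_end w'' w''P; rewrite w''_path w''_end bw0.
Qed.

End Rerouting.

Section Completeness.
Variables (R : realFieldType) (n : nat).
Implicit Types (w : walk n) (P : seq (walk n)) (f g : vertex n -> R) (S T : vertex n)
  (i : 'I_n).

Lemma dot_walk_boundary w g : dot (walk_boundary w) g = g (wend w) - g w.1.
Proof.
have dot_point y : \sum_v ((y == v)%:Z)%:~R * g v = g y.
  rewrite (bigD1 y) //= eqxx mul1r big1 ?addr0 // => v /negPf.
  by rewrite eq_sym => ->; rewrite mul0r.
rewrite /dot -!dot_point -sumrB; apply: eq_bigr => v _.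
by rewrite ffunE intrB mulrBl.
Qed.

Lemma value_dot_boundary f P : value f P = dot (boundary P) f.
Proof.
elim: P => [|w P IHP].
  by rewrite /value /boundary /dot !big_nil big1 // => v _; rewrite ffunE mul0r.
by rewrite /value /boundary !big_cons dotD dot_walk_boundary walk_valueE -IHP.
Qed.

Lemma nonnegative_boundary_value (D : {set vertex n}) f P :
  ~ (exists P, path_certificate D f P) -> matched_pairs P ->
  {in ~: D, forall v, boundary P v = 0} -> 0 <= dot (boundary P) f.
Proof.
move=> no_cert matchedP bdD; have [P' [matchedP' bdP' endsP']] := reroute matchedP.
rewrite leNgt; apply/negP=> neg; apply: no_cert; exists P'; split; last split.
- apply/allP=> w wP'; case: (boolP (is_cycle w)) => //= w_path.
  have [endD startD] := endsP' w wP' w_path.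
  apply/andP; split; [move: startD | move: endD]; apply: contraNT;
    by rewrite -in_setC => /bdD ->.
- exact: matched_pairs_matched.
- by rewrite value_dot_boundary bdP'.
Qed.

Definition matched_boundary (mu : {ffun vertex n -> int}) :=
  exists P, matched_pairs P /\ boundary P = mu.

Lemma add_closed_matched_boundary : add_closed matched_boundary.
Proof.
move=> _ _ [P [matchedP <-]] [Q [matchedQ <-]].
by exists (P ++ Q); rewrite /boundary big_cat; split=> //; apply: matched_pairs_cat.
Qed.

Definition submodular_pair (S T : vertex n) (i : 'I_n) : seq (walk n) :=
  [:: (S, [:: i]); (i |: T, [:: i])].

Lemma submodular_pair_matched S T i : S \subset T -> i \notin T ->
  matched_pairs (submodular_pair S T i).
Proof.
move=> ST iT; have iS : i \notin S by apply: contra iT; apply: (subsetP ST).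
exists [:: ((S, i), (T, i))]; split; first by rewrite /= /edge_le eqxx ST.
  by rewrite /up_edges /wtrav /= iS !inE eqxx /= setD1_notin.
by rewrite /down_edges /wtrav /= iS !inE eqxx /= setU1K.
Qed.

Lemma dot_boundary_submodular_pair S T i g : S \subset T -> i \notin T ->
  dot (boundary (submodular_pair S T i)) g = g (i |: S) - g S - (g (i |: T) - g T).
Proof.
move=> ST iT; have iS : i \notin S by apply: contra iT; apply: (subsetP ST).
rewrite -value_dot_boundary /value !big_cons big_nil !walk_valueE /wend /= /toggle.
by rewrite (negPf iS) !inE eqxx /= setU1K // addr0 opprB addrC.
Qed.

Definition submodular_boundaries : seq {ffun vertex n -> int} :=
  [seq boundary (submodular_pair t.1.1 t.1.2 t.2) | t <- enum
    [pred t : vertex n * vertex n * 'I_n | (t.1.1 \subset t.1.2) && (t.2 \notin t.1.2)]].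

Lemma extendable_of_no_certificate (D : {set vertex n}) f :
  ~ (exists P, path_certificate D f P) -> submodular_extendable D f.
Proof.
move=> no_cert; have [||g [gD gB]] := cone_extension (K := matched_boundary) (D := D)
  (f := f) (B := submodular_boundaries) add_closed_matched_boundary.
- move=> b /mapP[[[S T] i]]; rewrite mem_enum inE /= => /andP[ST iT] ->.
  by exists (submodular_pair S T i); split=> //; apply: submodular_pair_matched.
- by move=> _ [P [matchedP <-]]; apply: nonnegative_boundary_value.
exists g; split=> // S T i ST iT.
have /gB : boundary (submodular_pair S T i) \in submodular_boundaries.
  by apply/mapP; exists (S, T, i); rewrite // mem_enum inE /= ST iT.
by rewrite dot_boundary_submodular_pair // subr_ge0.
Qed.

End Completeness.

Theorem lemma9 (R : realFieldType) (n : nat) (D : {set {set 'I_n}})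
    (f : {set 'I_n} -> R) :
  ~ submodular_extendable D f <-> exists P : seq (walk n), path_certificate D f P.
Proof.
split=> [not_ext|[P cert]]; last exact: certificate_not_extendable cert.
by apply: NNPP => no_cert; apply/not_ext/extendable_of_no_certificate.
Qed.
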